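(* Let $(X,f,\mu)$ and $(Y,g,\nu)$ be ergodic probability measure preserving dynamical systems on relatively compact metric spaces $X$ and $Y$, with $g$ invertible, and let $h\colon X\to\mathbb Z$ be measurable with $\int_X h\,d\mu=0$. Let $F(x,y)=(f(x),g^{h(x)}(y))$ on $Z=X\times Y$, endowed with the sup metric $d$. Then for $\mu$-a.e. $x\in X$ and every $y\in Y$, \[ \limsup_{r\to0}\frac{\log\tau_r^F(x,y)}{-\log r}\le \limsup_{r\to0}\frac{\log\tau_r^{\widetilde F}(x)}{-\log r}. \]
   Context: Write $h_n=\sum_{k=0}^{n-1}h\circ f^k$, so that $F^n(x,y)=(f^n(x),g^{h_n(x)}(y))$. The first return time of $F$ is $\tau_r^F(z)=\inf\{n\ge1: d(F^n(z),z)<r\}$ for $z\in Z$, $r>0$. The $\mathbb Z$-extension is $\widetilde F\colon X\times\mathbb Z\to X\times\mathbb Z$, $\widetilde F(x,q)=(f(x),q+h(x))$, and its return time to the $r$-neighbourhood of the starting point (independent of $q$) is $\tau_r^{\widetilde F}(x)=\inf\{n\ge1: d(f^n(x),x)<r,\ h_n(x)=0\}$. *)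

From HB Require Import structures.
From mathcomp Require Import all_boot all_order all_algebra.
From mathcomp Require Import all_classical all_reals all_analysis.
Set Implicit Arguments. Unset Strict Implicit. Unset Printing Implicit Defensive.
Import Order.TTheory GRing.Theory Num.Theory.
Import numFieldTopology.Exports numFieldNormedType.Exports.
Local Open Scope classical_set_scope.
Local Open Scope ring_scope.

Section defs.
Variable R : realType.

Definition is_metric (T : Type) (d : T -> T -> R) : Prop :=
  [/\ forall x y, 0 <= d x y,
      forall x y, d x y = 0 <-> x = y,
      forall x y, d x y = d y x &
      forall x y z, d x z <= d x y + d y z].

(* relatively compact (= totally bounded: compact closure in the completion) *)
Definition totally_bounded (T : Type) (d : T -> T -> R) : Prop :=
  forall e : R, 0 < e -> exists (n : nat) (c : nat -> T),
    forall x, exists i, (i < n)%N /\ d x (c i) < e.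

Definition d_open (T : Type) (d : T -> T -> R) (A : set T) : Prop :=
  forall x, A x -> exists2 e : R, 0 < e & forall y, d x y < e -> A y.

Definition borel_for (dT : measure_display) (T : measurableType dT)
  (d : T -> T -> R) : Prop :=
  @measurable _ T = <<s d_open d >>.

Definition measure_preserving (dT : measure_display) (T : measurableType dT)
  (mu : probability T R) (f : T -> T) : Prop :=
  measurable_fun setT f /\
  forall A, measurable A -> mu (f @^-1` A) = mu A.

Definition ergodic (dT : measure_display) (T : measurableType dT)
  (mu : probability T R) (f : T -> T) : Prop :=
  measure_preserving mu f /\
  forall A, measurable A -> f @^-1` A = A -> mu A = 0%E \/ mu A = 1%E.

Definition iterz (T : Type) (g ginv : T -> T) (n : int) : T -> T :=
  match n with
  | Posz k => iter k g
  | Negz k => iter k.+1 ginv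
  end.

Definition hsum (X : Type) (f : X -> X) (h : X -> int) (n : nat) (x : X) : int :=
  \sum_(k < n) h (iter k f x).

Definition skewF (X Y : Type) (f : X -> X) (g ginv : Y -> Y) (h : X -> int)
  (z : X * Y) : X * Y :=
  (f z.1, iterz g ginv (h z.1) z.2).

Definition sup_metric (X Y : Type) (dX : X -> X -> R) (dY : Y -> Y -> R)
  (z w : X * Y) : R := Num.max (dX z.1 w.1) (dY z.2 w.2).

(* first return time (+oo if no return) *)
Definition return_time (T : Type) (d : T -> T -> R) (F : T -> T) (r : R) (z : T)
  : \bar R :=
  ereal_inf [set (n%:R)%:E | n in [set n : nat | (0 < n)%N /\ d (iter n F z) z < r]].

(* return time of the Z-extension to the r-neighbourhood *)
Definition Zext_return_time (X : Type) (d : X -> X -> R) (f : X -> X)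
  (h : X -> int) (r : R) (x : X) : \bar R :=
  ereal_inf [set (n%:R)%:E | n in [set n : nat |
     (0 < n)%N /\ d (iter n f x) x < r /\ hsum f h n x = 0]].

Definition elog (t : \bar R) : \bar R :=
  match t with
  | EFin a => (ln a)%:E
  | +oo%E => +oo%E
  | -oo%E => -oo%E
  end.

Definition rec_ratio (t : \bar R) (r : R) : \bar R :=
  (elog t * ((- ln r)^-1)%:E)%E.

Definition limsup_at0 (phi : R -> \bar R) : \bar R := limf_esup phi 0^'+.

End defs.

From HB Require Import structures.
From mathcomp Require Import all_boot all_order all_algebra.
From mathcomp Require Import all_classical all_reals all_analysis.
From mathcomp Require Import zify.
Set Implicit Arguments. Unset Strict Implicit. Unset Printing Implicit Defensive.
Import Order.TTheory GRing.Theory Num.Theory.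
Import numFieldTopology.Exports numFieldNormedType.Exports.
Local Open Scope classical_set_scope.
Local Open Scope ring_scope.

(* If [h_n(x) = 0] then [F^n(x, y) = (f^n x, y)], so every return time of the
   Z-extension to the [r]-neighbourhood of [x] is a return time of [F] to the
   [r]-ball around [(x, y)] in the sup metric.  Hence [tau_r^F(x, y)] is at most
   [tau_r^{~F}(x)] for every [x], [y] and [r], and the inequality passes through
   [log _ / - log r] (for [0 < r <= 1]) and the [limsup]. *)

Section IterZ.
Variables (T : Type) (g ginv : T -> T).
Hypotheses (gK : cancel g ginv) (ginvK : cancel ginv g).

Lemma iterzD1 (b : int) y : iterz g ginv (b + 1) y = g (iterz g ginv b y).
Proof.
case: b => [k|[|k]]; first by have -> : Posz k + 1 = Posz k.+1 by lia.
  by rewrite /= ginvK.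
have -> : Negz k.+1 + 1 = Negz k by rewrite !NegzE; lia.
by rewrite /= ginvK.
Qed.

Lemma iterzB1 (b : int) y : iterz g ginv (b - 1) y = ginv (iterz g ginv b y).
Proof.
case: b => [[|k]|k] //.
  have -> : Posz k.+1 - 1 = Posz k by lia.
  by rewrite /= gK.
by have -> : Negz k - 1 = Negz k.+1 by rewrite !NegzE; lia.
Qed.

Lemma iterzD (a b : int) y :
  iterz g ginv a (iterz g ginv b y) = iterz g ginv (a + b) y.
Proof.
case: a => [n|n]; elim: n => [|n IHn].
- by rewrite add0r.
- have -> : Posz n.+1 + b = Posz n + b + 1 by lia.
  by rewrite iterzD1 -IHn.
- have -> : Negz 0 + b = b - 1 by rewrite NegzE; lia.
  by rewrite iterzB1.
- have -> : Negz n.+1 + b = Negz n + b - 1 by rewrite !NegzE; lia.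
  by rewrite iterzB1 -IHn.
Qed.

End IterZ.

Lemma iter_skewF (X Y : Type) (f : X -> X) (g ginv : Y -> Y) (h : X -> int) :
  cancel g ginv -> cancel ginv g -> forall n x y,
  iter n (skewF f g ginv h) (x, y) = (iter n f x, iterz g ginv (hsum f h n x) y).
Proof.
move=> gK ginvK; elim=> [|n IHn] x y; first by rewrite /hsum big_ord0.
by rewrite iterS IHn /skewF /= iterzD // /hsum big_ord_recr /= addrC.
Qed.

Local Open Scope ereal_scope.

Lemma le_limf_esup (R : realType) (T : choiceType) (X : filteredType T)
    (F : set_system X) (u v : X -> \bar R) :
  Filter F -> (\forall x \near F, u x <= v x) -> limf_esup u F <= limf_esup v F.
Proof.
move=> FF uv; apply: le_ereal_inf_tmp => _ [V FV <-].
pose W := V `&` [set x | u x <= v x].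
apply: (@le_trans _ _ (ereal_sup (u @` W))).
  by apply: ereal_inf_lbound; exists W => //; apply: filterI.
apply: ge_ereal_sup => _ [x [Vx uvx] <-].
by apply: (le_trans uvx); apply: ereal_sup_ubound; exists x.
Qed.

Lemma le_elog (R : realType) (s t : \bar R) : 0 < s -> s <= t -> elog s <= elog t.
Proof.
case: s => [s| |] //; case: t => [t| |] //= s0 st; last by rewrite leey.
by rewrite lee_fin ler_ln ?posrE -?lte_fin ?(lt_le_trans s0 st).
Qed.

Lemma le_rec_ratio (R : realType) (r : R) (s t : \bar R) :
  (0 < r <= 1)%R -> 0 < s -> s <= t -> rec_ratio s r <= rec_ratio t r.
Proof.
move=> /andP[r0 r1] s0 st; apply: lee_wpmul2r; last exact: le_elog.
by rewrite lee_fin invr_ge0 oppr_ge0 ln_le0.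
Qed.

Lemma return_time_ge1 (R : realType) (T : Type) (d : T -> T -> R) (F : T -> T) r z :
  1 <= return_time d F r z.
Proof. by apply: le_ereal_inf_tmp => _ [n [n0 _] <-]; rewrite lee_fin ler1n. Qed.

Lemma return_time_skewF_le (R : realType) (X Y : Type)
    (dX : X -> X -> R) (dY : Y -> Y -> R)
    (f : X -> X) (g ginv : Y -> Y) (h : X -> int) r x y :
  cancel g ginv -> cancel ginv g ->
  (forall x1 x2, (0 <= dX x1 x2)%R) -> (forall y, dY y y = 0%R) ->
  return_time (sup_metric dX dY) (skewF f g ginv h) r (x, y)
  <= Zext_return_time dX f h r x.
Proof.
move=> gK ginvK dX_ge0 dY_refl.
apply: ereal_inf_le_tmp => _ [n [n0 [dn hn]] <-]; exists n => //; split=> //.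
by rewrite iter_skewF // hn /sup_metric /= dY_refl gt_max dn (le_lt_trans _ dn).
Qed.

Local Close Scope ereal_scope.

Theorem proposition2p1 (R : realType)
  (dispX dispY : measure_display)
  (X : measurableType dispX) (Y : measurableType dispY)
  (dX : X -> X -> R) (dY : Y -> Y -> R)
  (mu : probability X R) (nu : probability Y R)
  (f : X -> X) (g ginv : Y -> Y) (h : X -> int) :
  is_metric dX -> is_metric dY ->
  totally_bounded dX -> totally_bounded dY ->
  borel_for dX -> borel_for dY ->
  ergodic mu f -> ergodic nu g ->
  cancel g ginv -> cancel ginv g -> measurable_fun setT ginv ->
  (forall k : int, measurable (h @^-1` [set k])) ->
  mu.-integrable setT (fun x => ((h x)%:~R : R)%:E) ->
  (\int[mu]_x ((h x)%:~R : R)%:E = 0)%E ->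
  {ae mu, forall x : X, forall y : Y,
     (limsup_at0 (fun r => rec_ratio
         (return_time (sup_metric dX dY) (skewF f g ginv h) r (x, y)) r)
      <= limsup_at0 (fun r => rec_ratio (Zext_return_time dX f h r x) r))%E}.
Proof.
move=> [dX_ge0 _ _ _] [_ dY0 _ _] _ _ _ _ _ _ gK ginvK _ _ _ _.
have dY_refl y : dY y y = 0 by apply/dY0.
apply: aeW => x y; apply: le_limf_esup; near=> r.
apply: le_rec_ratio; last exact: return_time_skewF_le.
- apply/andP; split; near: r; first exact: nbhs_right_gt.
  by apply: nbhs_right_le; exact: ltr01.
- exact: lt_le_trans lte01 (return_time_ge1 _ _ _ _).
Unshelve. all: by end_near.
Qed.
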